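(* Let $k$ be a commutative ring and $H$ a $k$-bialgebra which is finitely generated projective as a $k$-module. Then $H$ is an FH-algebra if and only if the dual $H^*=\mathrm{Hom}_k(H,k)$ is an FH-algebra.
   Context: An FH-algebra over $k$ is a $k$-bialgebra $H$ which is a Frobenius algebra ($H$ finitely generated projective over $k$, with $f\in\mathrm{Hom}_k(H,k)$ and finitely many $x_i,y_i\in H$ such that $\sum_ix_if(y_ia)=a=\sum_if(ax_i)y_i$ for all $a$) whose Frobenius homomorphism $f$ can be chosen to be a right integral in $H^*$, i.e. $\sum f(a_1)a_2=f(a)1$ for all $a\in H$. $H^*$ is a bialgebra with convolution product $(gh)(x)=\sum g(x_1)h(x_2)$ and coproduct dual to the multiplication of $H$; $H^{**}$ is identified with $H$. *)

From HB Require Import structures.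
From mathcomp Require Import all_boot all_algebra.
Set Implicit Arguments. Unset Strict Implicit. Unset Printing Implicit Defensive.
Import GRing.Theory.
Local Open Scope ring_scope.

Definition klinear (k : comNzRingType) (M : lmodType k) (phi : M -> k) : Prop :=
  forall (a : k) (x y : M), phi (a *: x + y) = a * phi x + phi y.

(* M finitely generated projective over k (dual basis characterization) *)
Definition fgp (k : comNzRingType) (M : lmodType k) : Prop :=
  exists (n : nat) (e : 'I_n -> M) (g : 'I_n -> M -> k),
    (forall i, klinear (g i)) /\ forall x, x = \sum_(i < n) g i x *: e i.

(* An element of H (x) H is represented by a finite sum of pure tensors
   [:: (x_1,y_1); ...] meaning sum_i x_i (x) y_i.  tev phi psi t = (phi (x) psi)(t). *)
Definition tev (k : comNzRingType) (H : Type) (phi psi : H -> k) (t : seq (H * H)) : k :=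
  \sum_(p <- t) phi p.1 * psi p.2.

Definition conv (k : comNzRingType) (H : Type) (D : H -> seq (H * H))
  (phi psi : H -> k) : H -> k := fun a => tev phi psi (D a).

(* Equalities of tensors are tested against all phi (x) psi with
   phi, psi in H^*, which detects equality in H (x) H when H is f.g. projective. *)
Definition is_bialgebra (k : comNzRingType) (H : algType k)
  (D : H -> seq (H * H)) (eps : H -> k) : Prop :=
  [/\ klinear eps, eps 1 = 1 & forall a b : H, eps (a * b) = eps a * eps b] /\
  (forall phi psi, klinear phi -> klinear psi ->
     (forall (a : k) (x y : H),
        tev phi psi (D (a *: x + y)) = a * tev phi psi (D x) + tev phi psi (D y)) /\
     (forall a b : H, tev phi psi (D (a * b)) =
        \sum_(p <- D a) \sum_(q <- D b) phi (p.1 * q.1) * psi (p.2 * q.2)) /\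
     tev phi psi (D 1) = phi 1 * psi 1) /\
  (forall phi psi chi, klinear phi -> klinear psi -> klinear chi ->
     forall a : H, \sum_(p <- D a) tev phi psi (D p.1) * chi p.2 =
                   \sum_(p <- D a) phi p.1 * tev psi chi (D p.2)) /\
  (forall a : H, \sum_(p <- D a) eps p.1 *: p.2 = a /\
                 \sum_(p <- D a) eps p.2 *: p.1 = a).

Definition FH_algebra (k : comNzRingType) (H : algType k)
  (D : H -> seq (H * H)) (eps : H -> k) : Prop :=
  exists f : H -> k, klinear f /\
    (exists (n : nat) (x y : 'I_n -> H),
       forall a : H, \sum_(i < n) f (y i * a) *: x i = a /\
                     \sum_(i < n) f (a * x i) *: y i = a) /\
    (forall a : H, \sum_(p <- D a) f p.1 *: p.2 = f a *: 1).

(* H^* (convolution product, unit eps, coproduct dual to the multiplication of H,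
   counit chi |-> chi 1) is an FH-algebra.  The Frobenius homomorphism lies in
   H^** = H, i.e. is evaluation at some t in H; the right-integral condition
   sum F(chi_1) chi_2 = F(chi) eps, evaluated at a in H, reads
   sum chi_1(t) chi_2(a) = chi(t a) = chi(t) eps(a). *)
Definition FH_dual (k : comNzRingType) (H : algType k)
  (D : H -> seq (H * H)) (eps : H -> k) : Prop :=
  exists t : H,
    (exists (n : nat) (phi psi : 'I_n -> H -> k),
       (forall i, klinear (phi i) /\ klinear (psi i)) /\
       forall chi : H -> k, klinear chi -> forall a : H,
         \sum_(i < n) conv D (psi i) chi t * phi i a = chi a /\
         \sum_(i < n) conv D chi (phi i) t * psi i a = chi a) /\
    (forall chi : H -> k, klinear chi -> forall a : H, chi (t * a) = chi t * eps a).

(* If f is a Frobenius homomorphism of H with Frobenius system (x_i, y_i)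
   and a right integral, then t = sum eps(x_i) y_i and t' = sum eps(y_i) x_i
   are a right and a left integral of H with f(t c) = f(c t') = eps(c).  The
   map S c = sum f(t_1 c) t_2 satisfies sum S(c_1) c_2 = eps(c) 1, and
   X c = sum f(c t'_1) t'_2 is its inverse.  For a dual basis (e_j, g_j) of H,
   evaluation at t is then a Frobenius homomorphism of H^* with Frobenius
   system (g_j, f(- X e_j)), and a right integral because t is one.
   Conversely, if evaluation at t is a Frobenius homomorphism of H^* with
   Frobenius system (phi_i, psi_i) and a right integral, then
   f = sum phi_i(1) psi_i and f' = sum psi_i(1) phi_i are a right and a left
   integral of H^* with f(t c) = f'(t c) = eps(c); now f' yields an inverse X'
   of S, and f is a Frobenius homomorphism of H with Frobenius system
   (X' e_j, sum g_j(t_2) t_1).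
   Elements of H (x) H are only known through their pairings with phi (x) psi,
   so Sweedler computations are done on bilinear forms expanded in the dual
   basis, and lifted to H-valued maps through the g_j. *)

From mathcomp Require Import all_boot all_algebra.
From mathcomp Require Import ring.
Set Implicit Arguments. Unset Strict Implicit. Unset Printing Implicit Defensive.
Import GRing.Theory.
Local Open Scope ring_scope.

Lemma exchange_big3_mull (R : pzSemiRingType) (I : Type) (r : seq I) (m : nat)
    (F : I -> 'I_m -> 'I_m -> 'I_m -> R) (c : 'I_m -> 'I_m -> 'I_m -> R) :
  \sum_(p <- r) \sum_(j < m) \sum_(l < m) \sum_(q < m) F p j l q * c j l q =
  \sum_(j < m) \sum_(l < m) \sum_(q < m) (\sum_(p <- r) F p j l q) * c j l q.
Proof.
rewrite exchange_big; apply: eq_bigr => j _.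
rewrite exchange_big; apply: eq_bigr => l _.
rewrite exchange_big; apply: eq_bigr => q _.
by rewrite mulr_suml.
Qed.

Section Linearity.
Variables (k : comNzRingType) (H : algType k).

Definition hlinear (f : H -> H) :=
  forall (a : k) (x y : H), f (a *: x + y) = a *: f x + f y.

Section KLinear.
Variable phi : H -> k.
Hypothesis phiL : klinear phi.

Lemma klinear0 : phi 0 = 0.
Proof.
have := phiL 1 0 0; rewrite scaler0 addr0 mul1r.
by rewrite -{1}[phi 0]addr0 => /addrI.
Qed.

Lemma klinearD x y : phi (x + y) = phi x + phi y.
Proof. by have := phiL 1 x y; rewrite scale1r mul1r. Qed.

Lemma klinearZ a x : phi (a *: x) = a * phi x.
Proof. by have := phiL a x 0; rewrite !addr0 klinear0 addr0. Qed.

Lemma klinear_sum I r (P : pred I) (F : I -> H) :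
  phi (\sum_(i <- r | P i) F i) = \sum_(i <- r | P i) phi (F i).
Proof. exact: (big_morph phi klinearD klinear0). Qed.

End KLinear.

Section HLinear.
Variable f : H -> H.
Hypothesis fL : hlinear f.

Lemma hlinear0 : f 0 = 0.
Proof.
have := fL 1 0 0; rewrite scaler0 addr0 scale1r.
by rewrite -{1}[f 0]addr0 => /addrI.
Qed.

Lemma hlinearD x y : f (x + y) = f x + f y.
Proof. by have := fL 1 x y; rewrite !scale1r. Qed.

Lemma hlinearZ a x : f (a *: x) = a *: f x.
Proof. by have := fL a x 0; rewrite !addr0 hlinear0 addr0. Qed.

Lemma hlinear_sum I r (P : pred I) (F : I -> H) :
  f (\sum_(i <- r | P i) F i) = \sum_(i <- r | P i) f (F i).
Proof. exact: (big_morph f hlinearD hlinear0). Qed.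

End HLinear.

Lemma klinear_mull (phi : H -> k) c : klinear phi -> klinear (fun x => c * phi x).
Proof. by move=> phiL a x y; rewrite phiL mulrDr mulrCA. Qed.

Lemma klinear_comp (phi : H -> k) (f : H -> H) :
  klinear phi -> hlinear f -> klinear (fun x => phi (f x)).
Proof. by move=> phiL fL a x y; rewrite fL phiL. Qed.

Lemma klinear_big I (r : seq I) (F : I -> H -> k) :
  (forall i, klinear (F i)) -> klinear (fun x => \sum_(i <- r) F i x).
Proof.
move=> FL a x y; rewrite mulr_sumr -big_split /=.
by apply: eq_bigr => i _; rewrite FL.
Qed.

Lemma hlinear_mull c : hlinear (fun x => c * x).
Proof. by move=> a x y; rewrite mulrDr scalerAr. Qed.

Lemma hlinear_mulr c : hlinear (fun x => x * c).
Proof. by move=> a x y; rewrite mulrDl scalerAl. Qed.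

Lemma hlinear_comp (f h : H -> H) : hlinear f -> hlinear h -> hlinear (fun x => f (h x)).
Proof. by move=> fL hL a x y; rewrite hL fL. Qed.

Lemma hlinear_big I (r : seq I) (F : I -> H -> H) :
  (forall i, hlinear (F i)) -> hlinear (fun x => \sum_(i <- r) F i x).
Proof.
move=> FL a x y; rewrite scaler_sumr -big_split /=.
by apply: eq_bigr => i _; rewrite FL.
Qed.

Lemma hlinear_scalel (phi : H -> k) v : klinear phi -> hlinear (fun x => phi x *: v).
Proof. by move=> phiL a x y; rewrite phiL scalerDl scalerA. Qed.

Lemma hlinear_scaler c (f : H -> H) : hlinear f -> hlinear (fun x => c *: f x).
Proof. by move=> fL a x y; rewrite fL scalerDr !scalerA mulrC. Qed.

Section Frobenius.
Variables (f : H -> k) (m : nat) (x y : 'I_m -> H).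
Hypothesis fL : klinear f.
Hypothesis frobl : forall a, \sum_(i < m) f (y i * a) *: x i = a.
Hypothesis frobr : forall a, \sum_(i < m) f (a * x i) *: y i = a.

Lemma frobenius_reprl (phi : H -> k) c :
  klinear phi -> phi c = f ((\sum_(i < m) phi (x i) *: y i) * c).
Proof.
move=> phiL; rewrite -{1}[c]frobl mulr_suml !klinear_sum //.
by apply: eq_bigr => i _; rewrite -scalerAl !klinearZ // mulrC.
Qed.

Lemma frobenius_reprr (phi : H -> k) c :
  klinear phi -> phi c = f (c * \sum_(i < m) phi (y i) *: x i).
Proof.
move=> phiL; rewrite -{1}[c]frobr mulr_sumr !klinear_sum //.
by apply: eq_bigr => i _; rewrite -scalerAr !klinearZ // mulrC.
Qed.

Lemma frobenius_injl a b : (forall c, f (a * c) = f (b * c)) -> a = b.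
Proof. by move=> fab; rewrite -[a]frobr -[b]frobr; apply: eq_bigr => i _; rewrite fab. Qed.

Lemma frobenius_injr a b : (forall c, f (c * a) = f (c * b)) -> a = b.
Proof. by move=> fab; rewrite -[a]frobl -[b]frobl; apply: eq_bigr => i _; rewrite fab. Qed.

End Frobenius.
End Linearity.

Section Bialgebra.
Variables (k : comNzRingType) (H : algType k) (D : H -> seq (H * H)) (eps : H -> k).
Variables (n : nat) (e : 'I_n -> H) (g : 'I_n -> H -> k).
Hypothesis g_linear : forall j, klinear (g j).
Hypothesis dual_basisE : forall x, x = \sum_(j < n) g j x *: e j.
Hypothesis coprodZD : forall phi psi, klinear phi -> klinear psi ->
  forall (a : k) (x y : H),
    tev phi psi (D (a *: x + y)) = a * tev phi psi (D x) + tev phi psi (D y).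
Hypothesis coprodM : forall phi psi, klinear phi -> klinear psi ->
  forall a b : H, tev phi psi (D (a * b)) =
    \sum_(p <- D a) \sum_(q <- D b) phi (p.1 * q.1) * psi (p.2 * q.2).
Hypothesis coprod1 : forall phi psi, klinear phi -> klinear psi ->
  tev phi psi (D 1) = phi 1 * psi 1.
Hypothesis coassoc : forall phi psi chi, klinear phi -> klinear psi -> klinear chi ->
  forall a : H, \sum_(p <- D a) tev phi psi (D p.1) * chi p.2 =
                \sum_(p <- D a) phi p.1 * tev psi chi (D p.2).
Hypothesis eps_linear : klinear eps.
Hypothesis eps1 : eps 1 = 1.
Hypothesis epsM : forall a b, eps (a * b) = eps a * eps b.
Hypothesis counitl : forall a, \sum_(p <- D a) eps p.1 *: p.2 = a.
Hypothesis counitr : forall a, \sum_(p <- D a) eps p.2 *: p.1 = a.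

Lemma dual_basis_inj x y : (forall j, g j x = g j y) -> x = y.
Proof.
by move=> gxy; rewrite (dual_basisE x) (dual_basisE y); apply: eq_bigr => j _; rewrite gxy.
Qed.

Lemma klinear_expand (phi : H -> k) x :
  klinear phi -> phi x = \sum_(j < n) g j x * phi (e j).
Proof.
by move=> phiL; rewrite {1}(dual_basisE x) klinear_sum //; apply: eq_bigr => j _; rewrite klinearZ.
Qed.

Lemma klinear_tev_coprod (phi psi : H -> k) :
  klinear phi -> klinear psi -> klinear (fun w => tev phi psi (D w)).
Proof. by move=> phiL psiL a x y; rewrite coprodZD. Qed.

Definition bilinear_form (h : H -> H -> k) :=
  (forall y, klinear (fun x => h x y)) /\ (forall x, klinear (h x)).

Definition trilinear_form (h : H -> H -> H -> k) :=
  [/\ forall y z, klinear (fun x => h x y z), forall x z, klinear (fun y => h x y z)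
    & forall x y, klinear (h x y)].

Lemma bilinear_form_expand h x y : bilinear_form h ->
  h x y = \sum_(j < n) \sum_(l < n) (g j x * g l y) * h (e j) (e l).
Proof.
case=> hL1 hL2; rewrite (klinear_expand x (hL1 y)); apply: eq_bigr => j _.
rewrite (klinear_expand y (hL2 (e j))) mulr_sumr; apply: eq_bigr => l _.
by rewrite !mulrA [g j x * _]mulrC.
Qed.

Lemma trilinear_form_expand h x y z : trilinear_form h ->
  h x y z = \sum_(j < n) \sum_(l < n) \sum_(q < n)
              (g j x * g l y * g q z) * h (e j) (e l) (e q).
Proof.
case=> hL1 hL2 hL3; rewrite (klinear_expand x (hL1 y z)); apply: eq_bigr => j _.
rewrite (klinear_expand y (hL2 (e j) z)) mulr_sumr; apply: eq_bigr => l _.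
rewrite (klinear_expand z (hL3 (e j) (e l))) !mulr_sumr; apply: eq_bigr => q _.
by rewrite !mulrA.
Qed.

Lemma sum_bilinear_form (s : seq (H * H)) h : bilinear_form h ->
  \sum_(p <- s) h p.1 p.2 =
  \sum_(j < n) \sum_(l < n) tev (g j) (g l) s * h (e j) (e l).
Proof.
move=> hB; under eq_bigr => p _ do rewrite (bilinear_form_expand p.1 p.2 hB).
rewrite exchange_big; apply: eq_bigr => j _.
by rewrite exchange_big; apply: eq_bigr => l _; rewrite /tev mulr_suml.
Qed.

Lemma coprod_formZD h a x y : bilinear_form h ->
  \sum_(p <- D (a *: x + y)) h p.1 p.2 =
  a * \sum_(p <- D x) h p.1 p.2 + \sum_(p <- D y) h p.1 p.2.
Proof.
move=> hB; rewrite !(sum_bilinear_form _ hB) mulr_sumr -big_split.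
apply: eq_bigr => j _ /=; rewrite mulr_sumr -big_split; apply: eq_bigr => l _ /=.
by rewrite coprodZD // mulrDl mulrA.
Qed.

Lemma coprod_formZ h a x : bilinear_form h ->
  \sum_(p <- D (a *: x)) h p.1 p.2 = a * \sum_(p <- D x) h p.1 p.2.
Proof.
move=> hB; have coprod0 : \sum_(p <- D 0) h p.1 p.2 = 0.
  have := coprod_formZD 1 0 0 hB; rewrite scaler0 addr0 mul1r.
  by rewrite -{1}[\sum_(p <- D 0) _]addr0 => /addrI.
by rewrite -[a *: x]addr0 coprod_formZD // coprod0 addr0.
Qed.

Lemma coprod_formM h a b : bilinear_form h ->
  \sum_(p <- D (a * b)) h p.1 p.2 =
  \sum_(p <- D a) \sum_(q <- D b) h (p.1 * q.1) (p.2 * q.2).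
Proof.
move=> hB; rewrite (sum_bilinear_form _ hB).
under [RHS]eq_bigr => p _ do under eq_bigr => q _ do
  rewrite (bilinear_form_expand (p.1 * q.1) (p.2 * q.2) hB).
under [RHS]eq_bigr => p _ do rewrite exchange_big.
rewrite [RHS]exchange_big; apply: eq_bigr => j _.
under [RHS]eq_bigr => p _ do rewrite exchange_big.
rewrite [RHS]exchange_big; apply: eq_bigr => l _ /=.
by rewrite coprodM // mulr_suml; apply: eq_bigr => p _; rewrite mulr_suml.
Qed.

Lemma coassoc_form h a : trilinear_form h ->
  \sum_(p <- D a) \sum_(q <- D p.1) h q.1 q.2 p.2 =
  \sum_(p <- D a) \sum_(q <- D p.2) h p.1 q.1 q.2.
Proof.
move=> hT.
transitivity (\sum_(j < n) \sum_(l < n) \sum_(q < n)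
  (\sum_(p <- D a) tev (g j) (g l) (D p.1) * g q p.2) * h (e j) (e l) (e q)).
  rewrite -exchange_big3_mull; apply: eq_bigr => p _.
  under eq_bigr => r _ do rewrite (trilinear_form_expand r.1 r.2 p.2 hT).
  rewrite exchange_big3_mull.
  apply: eq_bigr => j _; apply: eq_bigr => l _; apply: eq_bigr => q _.
  by congr (_ * _); rewrite /tev mulr_suml.
transitivity (\sum_(j < n) \sum_(l < n) \sum_(q < n)
  (\sum_(p <- D a) g j p.1 * tev (g l) (g q) (D p.2)) * h (e j) (e l) (e q)).
  apply: eq_bigr => j _; apply: eq_bigr => l _; apply: eq_bigr => q _.
  by rewrite coassoc.
rewrite -exchange_big3_mull; apply: eq_bigr => p _.
under [RHS]eq_bigr => r _ do rewrite (trilinear_form_expand p.1 r.1 r.2 hT).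
rewrite exchange_big3_mull.
apply: eq_bigr => j _; apply: eq_bigr => l _; apply: eq_bigr => q _.
by rewrite /tev mulr_sumr; congr (_ * _); apply: eq_bigr => r _; rewrite mulrA.
Qed.

Definition bilinear_map (h : H -> H -> H) :=
  (forall y, hlinear (fun x => h x y)) /\ (forall x, hlinear (h x)).

Definition trilinear_map (h : H -> H -> H -> H) :=
  [/\ forall y z, hlinear (fun x => h x y z), forall x z, hlinear (fun y => h x y z)
    & forall x y, hlinear (h x y)].

Lemma bilinear_map_form j h : bilinear_map h -> bilinear_form (fun x y => g j (h x y)).
Proof. by case=> hL1 hL2; split=> y; apply: klinear_comp. Qed.

Lemma trilinear_map_form j h : trilinear_map h -> trilinear_form (fun x y z => g j (h x y z)).
Proof. by case=> hL1 hL2 hL3; split=> *; apply: klinear_comp. Qed.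

Lemma bilinear_map_scalel (phi : H -> k) :
  klinear phi -> bilinear_map (fun x y => phi x *: y).
Proof.
by move=> phiL; split=> [y|x]; [apply: hlinear_scalel | apply: hlinear_scaler].
Qed.

Lemma bilinear_map_scaler (phi : H -> k) :
  klinear phi -> bilinear_map (fun x y => phi y *: x).
Proof.
by move=> phiL; split=> [y|x]; [apply: hlinear_scaler | apply: hlinear_scalel].
Qed.

Lemma coprod_mapZ h a x : bilinear_map h ->
  \sum_(p <- D (a *: x)) h p.1 p.2 = a *: \sum_(p <- D x) h p.1 p.2.
Proof.
move=> hB; apply: dual_basis_inj => j; rewrite klinearZ // !klinear_sum //.
exact: (coprod_formZ _ _ (bilinear_map_form j hB)).
Qed.

Lemma coprod_mapM h a b : bilinear_map h ->
  \sum_(p <- D (a * b)) h p.1 p.2 =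
  \sum_(p <- D a) \sum_(q <- D b) h (p.1 * q.1) (p.2 * q.2).
Proof.
move=> hB; apply: dual_basis_inj => j; rewrite !klinear_sum //.
under [RHS]eq_bigr => p _ do rewrite klinear_sum //.
exact: (coprod_formM _ _ (bilinear_map_form j hB)).
Qed.

Lemma coassoc_map h a : trilinear_map h ->
  \sum_(p <- D a) \sum_(q <- D p.1) h q.1 q.2 p.2 =
  \sum_(p <- D a) \sum_(q <- D p.2) h p.1 q.1 q.2.
Proof.
move=> hT; apply: dual_basis_inj => j; rewrite !klinear_sum //.
under eq_bigr => p _ do rewrite klinear_sum //.
under [RHS]eq_bigr => p _ do rewrite klinear_sum //.
exact: (coassoc_form _ (trilinear_map_form j hT)).
Qed.

Section Integral.
Variables (f : H -> k) (t : H).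
Hypothesis f_linear : klinear f.
Hypothesis f_integral : forall a, \sum_(p <- D a) f p.1 *: p.2 = f a *: 1.
Hypothesis t_integral : forall c, t * c = eps c *: t.
Hypothesis f_t : forall c, f (t * c) = eps c.

Definition antipode c := \sum_(p <- D t) f (p.1 * c) *: p.2.

Lemma antipode_linear : hlinear antipode.
Proof.
apply: hlinear_big => p; apply: hlinear_scalel.
exact: (klinear_comp f_linear (hlinear_mull p.1)).
Qed.

Lemma antipode_convl c : \sum_(q <- D c) antipode q.1 * q.2 = eps c *: 1.
Proof.
rewrite -f_t -f_integral (coprod_mapM _ _ (bilinear_map_scalel f_linear)) exchange_big.
apply: eq_bigr => q _; rewrite /antipode mulr_suml; apply: eq_bigr => p _.
by rewrite -scalerAl.
Qed.

Lemma antipode_convl_mulr c w : \sum_(q <- D c) antipode q.1 * (q.2 * w) = eps c *: w.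
Proof.
under eq_bigr do rewrite mulrA.
by rewrite -mulr_suml antipode_convl -scalerAl mul1r.
Qed.

Lemma conv_antipode (chi : H -> k) u :
  klinear chi -> conv D (fun b => f (b * u)) chi t = chi (antipode u).
Proof.
by move=> chiL; rewrite /antipode klinear_sum //; apply: eq_bigr => p _; rewrite klinearZ.
Qed.

Section InverseFromElement.
Variable t' : H.
Hypothesis t'_integral : forall c, c * t' = eps c *: t'.
Hypothesis f_t' : forall c, f (c * t') = eps c.

Definition antipode_inv_elt c := \sum_(p <- D t') f (c * p.1) *: p.2.

Lemma antipode_inv_elt_linear : hlinear antipode_inv_elt.
Proof.
apply: hlinear_big => p; apply: hlinear_scalel.
exact: (klinear_comp f_linear (hlinear_mulr p.1)).
Qed.

Lemma antipode_inv_elt_convr c :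
  \sum_(q <- D c) q.2 * antipode_inv_elt q.1 = eps c *: 1.
Proof.
rewrite -f_t' -f_integral (coprod_mapM _ _ (bilinear_map_scalel f_linear)).
apply: eq_bigr => q _; rewrite /antipode_inv_elt mulr_sumr; apply: eq_bigr => p _.
by rewrite -scalerAr.
Qed.

(* As a_2 t' = eps(a_2) t', X (S a) = sum f(S(a_1) (a_2 t')_1) (a_2 t')_2;
   coassociativity and sum S(c_1) c_2 = eps(c) 1 collapse this to
   a sum f(t'_1) t'_2 = f(t') a = a. *)
Lemma antipodeK_elt : cancel antipode antipode_inv_elt.
Proof.
move=> a; pose fS_linear u := klinear_comp f_linear (hlinear_mull (antipode u)).
have -> : antipode_inv_elt (antipode a) =
    \sum_(q <- D a) \sum_(p <- D (q.2 * t')) f (antipode q.1 * p.1) *: p.2.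
  under [RHS]eq_bigr => q _ do
    rewrite t'_integral (coprod_mapZ _ _ (bilinear_map_scalel (fS_linear q.1))).
  rewrite -{1}[a]counitr (hlinear_sum antipode_linear) (hlinear_sum antipode_inv_elt_linear).
  by apply: eq_bigr => q _; rewrite (hlinearZ antipode_linear) (hlinearZ antipode_inv_elt_linear).
under eq_bigr => q _ do rewrite (coprod_mapM _ _ (bilinear_map_scalel (fS_linear q.1))).
pose h u v w := \sum_(p <- D t') f (antipode u * (v * p.1)) *: (w * p.2).
have hT : trilinear_map h.
  split=> [y z|x z|x y]; apply: hlinear_big => p.
  - apply: hlinear_scalel.
    exact: (klinear_comp f_linear (hlinear_comp (hlinear_mulr _) antipode_linear)).
  - apply: hlinear_scalel.
    exact: (klinear_comp f_linear (hlinear_comp (hlinear_mull _) (hlinear_mulr p.1))).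
  - by apply: hlinear_scaler; apply: hlinear_mulr.
rewrite [LHS](_ : _ = \sum_(q <- D a) \sum_(r <- D q.2) h q.1 r.1 r.2) // -coassoc_map //.
under eq_bigr => q _ do rewrite exchange_big.
under eq_bigr => q _ do under eq_bigr => p _ do
  rewrite -scaler_suml -klinear_sum // antipode_convl_mulr klinearZ //.
rewrite exchange_big.
transitivity (a * \sum_(p <- D t') f p.1 *: p.2).
  rewrite mulr_sumr; apply: eq_bigr => p _.
  rewrite -{2}[a]counitl mulr_suml; apply: eq_bigr => q _.
  by rewrite -scalerAl -scalerAr scalerA.
by rewrite f_integral -[t']mul1r f_t' eps1 scale1r mulr1.
Qed.

Lemma antipode_inv_eltK : cancel antipode_inv_elt antipode.
Proof.
move=> a; pose fX_linear u := klinear_comp f_linear (hlinear_mulr (antipode_inv_elt u)).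
have -> : antipode (antipode_inv_elt a) =
    \sum_(q <- D a) \sum_(p <- D (t * q.2)) f (p.1 * antipode_inv_elt q.1) *: p.2.
  under [RHS]eq_bigr => q _ do
    rewrite t_integral (coprod_mapZ _ _ (bilinear_map_scalel (fX_linear q.1))).
  rewrite -{1}[a]counitr (hlinear_sum antipode_inv_elt_linear) (hlinear_sum antipode_linear).
  by apply: eq_bigr => q _; rewrite (hlinearZ antipode_inv_elt_linear) (hlinearZ antipode_linear).
under eq_bigr => q _ do
  rewrite (coprod_mapM _ _ (bilinear_map_scalel (fX_linear q.1))) exchange_big.
pose h u v w := \sum_(p <- D t) f (p.1 * (v * antipode_inv_elt u)) *: (p.2 * w).
have hT : trilinear_map h.
  split=> [y z|x z|x y]; apply: hlinear_big => p.
  - apply: hlinear_scalel; apply: (klinear_comp f_linear).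
    exact: (hlinear_comp (hlinear_mull _) (hlinear_comp (hlinear_mull _) antipode_inv_elt_linear)).
  - apply: hlinear_scalel.
    exact: (klinear_comp f_linear (hlinear_comp (hlinear_mull _) (hlinear_mulr _))).
  - by apply: hlinear_scaler; apply: hlinear_mull.
rewrite [LHS](_ : _ = \sum_(q <- D a) \sum_(r <- D q.2) h q.1 r.1 r.2); last first.
  by do 3!(apply: eq_bigr => ? _); rewrite /= mulrA.
rewrite -coassoc_map //.
have conv_mull q w : \sum_(r <- D q) w * (r.2 * antipode_inv_elt r.1) = eps q *: w.
  by rewrite -mulr_sumr antipode_inv_elt_convr -scalerAr mulr1.
under eq_bigr => q _ do rewrite exchange_big.
under eq_bigr => q _ do under eq_bigr => p _ do
  rewrite -scaler_suml -klinear_sum // conv_mull klinearZ //.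
rewrite exchange_big.
transitivity ((\sum_(p <- D t) f p.1 *: p.2) * a).
  rewrite mulr_suml; apply: eq_bigr => p _.
  rewrite -{2}[a]counitl mulr_sumr; apply: eq_bigr => q _.
  by rewrite -scalerAl -scalerAr scalerA mulrC.
by rewrite f_integral -[t]mulr1 f_t eps1 scale1r mul1r.
Qed.

Lemma antipode_inv_elt_pairing chi c a : (forall b, chi b = f (b * c)) ->
  \sum_(j < n) conv D chi (g j) t * f (a * antipode_inv_elt (e j)) = chi a.
Proof.
move=> chiE.
have fX_linear : klinear (fun b => f (a * antipode_inv_elt b)).
  exact: (klinear_comp f_linear (hlinear_comp (hlinear_mull a) antipode_inv_elt_linear)).
transitivity (\sum_(p <- D t) f (p.1 * c) * f (a * antipode_inv_elt p.2)).
  rewrite /conv /tev; under eq_bigr do rewrite mulr_suml.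
  rewrite exchange_big; apply: eq_bigr => p _.
  rewrite chiE (klinear_expand p.2 fX_linear) mulr_sumr.
  by apply: eq_bigr => j _; rewrite mulrA.
rewrite chiE -{2}[c]antipodeK_elt /antipode.
rewrite (hlinear_sum antipode_inv_elt_linear) mulr_sumr klinear_sum //.
apply: eq_bigr => p _.
by rewrite (hlinearZ antipode_inv_elt_linear) -scalerAr klinearZ.
Qed.

End InverseFromElement.

Section InverseFromFunctional.
Variable f' : H -> k.
Hypothesis f'_linear : klinear f'.
Hypothesis f'_integral : forall a, \sum_(p <- D a) f' p.2 *: p.1 = f' a *: 1.
Hypothesis f'_t : forall c, f' (t * c) = eps c.

Definition antipode_inv_fun c := \sum_(p <- D t) f' (p.2 * c) *: p.1.

Lemma antipode_inv_fun_linear : hlinear antipode_inv_fun.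
Proof.
apply: hlinear_big => p; apply: hlinear_scalel.
exact: (klinear_comp f'_linear (hlinear_mull p.2)).
Qed.

Lemma antipode_inv_fun_convl c :
  \sum_(q <- D c) antipode_inv_fun q.2 * q.1 = eps c *: 1.
Proof.
rewrite -f'_t -f'_integral (coprod_mapM _ _ (bilinear_map_scaler f'_linear)) exchange_big.
apply: eq_bigr => q _; rewrite /antipode_inv_fun mulr_suml; apply: eq_bigr => p _.
by rewrite -scalerAl.
Qed.

Lemma antipode_exchange u v :
  \sum_(q <- D u) f' (q.2 * v) *: antipode q.1 = \sum_(q <- D v) f' (u * q.2) *: q.1.
Proof.
pose h a b c := \sum_(s <- D v) f' (c * s.2) *: (antipode a * (b * s.1)).
have hT : trilinear_map h.
  split=> [y z|x z|x y]; apply: hlinear_big => p.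
  - exact: (hlinear_scaler _ (hlinear_comp (hlinear_mulr _) antipode_linear)).
  - exact: (hlinear_scaler _ (hlinear_comp (hlinear_mull _) (hlinear_mulr _))).
  - exact: (hlinear_scalel _ (klinear_comp f'_linear (hlinear_mulr _))).
transitivity (\sum_(q <- D u) \sum_(r <- D q.2) h q.1 r.1 r.2).
  apply: eq_bigr => q _.
  rewrite -[_ *: antipode q.1]mulr1 -scalerAl scalerAr -f'_integral.
  rewrite (coprod_mapM _ _ (bilinear_map_scaler f'_linear)) mulr_sumr.
  apply: eq_bigr => r _; rewrite mulr_sumr; apply: eq_bigr => s _.
  by rewrite /= -scalerAr.
rewrite -coassoc_map // /h.
under eq_bigr => q _ do rewrite exchange_big.
under eq_bigr => q _ do under eq_bigr => s _ do rewrite -scaler_sumr antipode_convl_mulr.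
rewrite exchange_big; apply: eq_bigr => s _.
rewrite -{2}[u]counitl mulr_suml klinear_sum // scaler_suml.
by apply: eq_bigr => q _; rewrite scalerA -scalerAl klinearZ // mulrC.
Qed.

Lemma antipode_inv_funK : cancel antipode_inv_fun antipode.
Proof.
move=> a; rewrite /antipode_inv_fun (hlinear_sum antipode_linear).
under eq_bigr do rewrite (hlinearZ antipode_linear).
rewrite antipode_exchange -{2}[a]counitr.
by apply: eq_bigr => q _; rewrite f'_t.
Qed.

Lemma antipode_inv_fun_exchange u v :
  \sum_(q <- D u) f (q.1 * v) *: antipode_inv_fun q.2 =
  \sum_(q <- D v) f (u * q.1) *: q.2.
Proof.
pose h a b c := \sum_(s <- D v) f (a * s.1) *: (antipode_inv_fun c * (b * s.2)).
have hT : trilinear_map h.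
  split=> [y z|x z|x y]; apply: hlinear_big => p.
  - exact: (hlinear_scalel _ (klinear_comp f_linear (hlinear_mulr _))).
  - exact: (hlinear_scaler _ (hlinear_comp (hlinear_mull _) (hlinear_mulr _))).
  - exact: (hlinear_scaler _ (hlinear_comp (hlinear_mulr _) antipode_inv_fun_linear)).
transitivity (\sum_(q <- D u) \sum_(r <- D q.1) h r.1 r.2 q.2).
  apply: eq_bigr => q _.
  rewrite -[_ *: antipode_inv_fun q.2]mulr1 -scalerAl scalerAr -f_integral.
  rewrite (coprod_mapM _ _ (bilinear_map_scalel f_linear)) mulr_sumr.
  apply: eq_bigr => r _; rewrite mulr_sumr; apply: eq_bigr => s _.
  by rewrite /= -scalerAr.
rewrite coassoc_map // /h.
have conv_mulr q w : \sum_(r <- D q) antipode_inv_fun r.2 * (r.1 * w) = eps q *: w.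
  under eq_bigr do rewrite mulrA.
  by rewrite -mulr_suml antipode_inv_fun_convl -scalerAl mul1r.
under eq_bigr => q _ do rewrite exchange_big.
under eq_bigr => q _ do under eq_bigr => s _ do rewrite -scaler_sumr conv_mulr.
rewrite exchange_big; apply: eq_bigr => s _.
rewrite -{2}[u]counitr mulr_suml klinear_sum // scaler_suml.
by apply: eq_bigr => q _; rewrite scalerA -scalerAl klinearZ // mulrC.
Qed.

Lemma antipodeK_fun : cancel antipode antipode_inv_fun.
Proof.
move=> a; rewrite /antipode (hlinear_sum antipode_inv_fun_linear).
under eq_bigr do rewrite (hlinearZ antipode_inv_fun_linear).
rewrite antipode_inv_fun_exchange -{2}[a]counitl.
by apply: eq_bigr => q _; rewrite f_t.
Qed.

End InverseFromFunctional.
End Integral.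

Lemma FH_algebra_FH_dual : FH_algebra D eps -> FH_dual D eps.
Proof.
case=> f [f_linear [[m [x [y frob]]] f_integral]].
have frobl a := (frob a).1; have frobr a := (frob a).2.
pose t := \sum_(i < m) eps (x i) *: y i.
have f_t c : f (t * c) = eps c by rewrite -(frobenius_reprl f_linear frobl).
have t_integral c : t * c = eps c *: t.
  apply: (frobenius_injl frobr) => d.
  by rewrite -mulrA f_t -scalerAl klinearZ // f_t epsM.
pose t' := \sum_(i < m) eps (y i) *: x i.
have f_t' c : f (c * t') = eps c by rewrite -(frobenius_reprr f_linear frobr).
have t'_integral c : c * t' = eps c *: t'.
  apply: (frobenius_injr frobl) => d.
  by rewrite mulrA f_t' -scalerAr klinearZ // f_t' epsM mulrC.
exists t; split; last by move=> chi chiL a; rewrite t_integral klinearZ // mulrC.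
exists n, g, (fun j b => f (b * antipode_inv_elt f t' (e j))); split.
  move=> j; split=> //.
  exact: (klinear_comp f_linear (hlinear_mulr _)).
move=> chi chiL a; split.
  rewrite [RHS](klinear_expand _ chiL); apply: eq_bigr => j _.
  by rewrite conv_antipode // antipode_inv_eltK // mulrC.
apply: antipode_inv_elt_pairing => // b.
exact: (frobenius_reprr f_linear frobr).
Qed.

Section DualFrobenius.
Variables (t : H) (N : nat) (phi psi : 'I_N -> H -> k).
Hypothesis phi_linear : forall i, klinear (phi i).
Hypothesis psi_linear : forall i, klinear (psi i).
Hypothesis frob_duall : forall chi, klinear chi -> forall a,
  \sum_(i < N) conv D (psi i) chi t * phi i a = chi a.
Hypothesis frob_dualr : forall chi, klinear chi -> forall a,
  \sum_(i < N) conv D chi (phi i) t * psi i a = chi a.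
Hypothesis t_integral : forall c, t * c = eps c *: t.

Definition rint b := \sum_(i < N) phi i 1 * psi i b.
Definition lint b := \sum_(i < N) psi i 1 * phi i b.

Lemma rint_linear : klinear rint.
Proof. by apply: klinear_big => i; apply: klinear_mull. Qed.

Lemma lint_linear : klinear lint.
Proof. by apply: klinear_big => i; apply: klinear_mull. Qed.

Lemma tev_rint_t chi : klinear chi -> tev rint chi (D t) = chi 1.
Proof.
move=> chiL; rewrite -[RHS](frob_duall chiL) /conv /tev.
under eq_bigr do rewrite mulr_suml.
rewrite exchange_big; apply: eq_bigr => i _.
by rewrite mulr_suml; apply: eq_bigr => p _; rewrite -mulrA mulrC.
Qed.

Lemma tev_lint_t chi : klinear chi -> tev chi lint (D t) = chi 1.
Proof.
move=> chiL; rewrite -[RHS](frob_dualr chiL) /conv /tev.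
under eq_bigr do rewrite mulr_sumr.
rewrite exchange_big; apply: eq_bigr => i _.
by rewrite mulr_suml; apply: eq_bigr => p _; rewrite mulrCA mulrC.
Qed.

Lemma rint_t c : rint (t * c) = eps c.
Proof.
have rint_t1 : rint t = 1.
  rewrite -{1}[t]counitr (klinear_sum rint_linear) -[RHS]eps1.
  rewrite -(tev_rint_t eps_linear).
  by apply: eq_bigr => p _; rewrite (klinearZ rint_linear) mulrC.
by rewrite t_integral (klinearZ rint_linear) rint_t1 mulr1.
Qed.

Lemma lint_t c : lint (t * c) = eps c.
Proof.
have lint_t1 : lint t = 1.
  rewrite -{1}[t]counitl (klinear_sum lint_linear) -[RHS]eps1.
  rewrite -(tev_lint_t eps_linear).
  by apply: eq_bigr => p _; rewrite (klinearZ lint_linear).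
by rewrite t_integral (klinearZ lint_linear) lint_t1 mulr1.
Qed.

Lemma dual_frobenius_eq0r z a :
  klinear z -> (forall i, conv D z (phi i) t = 0) -> z a = 0.
Proof. by move=> zL z0; rewrite -(frob_dualr zL); apply: big1 => i _; rewrite z0 mul0r. Qed.

Lemma dual_frobenius_eq0l z a :
  klinear z -> (forall i, conv D (psi i) z t = 0) -> z a = 0.
Proof. by move=> zL z0; rewrite -(frob_duall zL); apply: big1 => i _; rewrite z0 mul0r. Qed.

Lemma tev_rint chi a : klinear chi -> tev rint chi (D a) = rint a * chi 1.
Proof.
move=> chiL; apply/eqP; rewrite -subr_eq0; apply/eqP.
pose z w := tev rint chi (D w) - rint w * chi 1.
have zL : klinear z by move=> c x y; rewrite /z (coprodZD rint_linear chiL) rint_linear; ring.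
apply: (dual_frobenius_eq0r (z := z)) => // i.
rewrite /conv /tev /z; under eq_bigr do rewrite mulrBl.
rewrite sumrB (coassoc rint_linear chiL (phi_linear i)).
rewrite -[X in X - _]/(tev rint (fun w => tev chi (phi i) (D w)) (D t)).
rewrite (tev_rint_t (klinear_tev_coprod chiL (phi_linear i))) coprod1 //.
under [X in _ - X]eq_bigr do rewrite mulrAC.
by rewrite -mulr_suml -/(tev rint (phi i) (D t)) tev_rint_t // mulrC subrr.
Qed.

Lemma tev_lint chi a : klinear chi -> tev chi lint (D a) = chi 1 * lint a.
Proof.
move=> chiL; apply/eqP; rewrite -subr_eq0; apply/eqP.
pose z w := tev chi lint (D w) - chi 1 * lint w.
have zL : klinear z by move=> c x y; rewrite /z (coprodZD chiL lint_linear) lint_linear; ring.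
apply: (dual_frobenius_eq0l (z := z)) => // i.
rewrite /conv /tev /z; under eq_bigr do rewrite mulrBr.
rewrite sumrB -(coassoc (psi_linear i) chiL lint_linear).
rewrite -[X in X - _]/(tev (fun w => tev (psi i) chi (D w)) lint (D t)).
rewrite (tev_lint_t (klinear_tev_coprod (psi_linear i) chiL)) coprod1 //.
under [X in _ - X]eq_bigr do rewrite mulrCA.
by rewrite -mulr_sumr -/(tev (psi i) lint (D t)) tev_lint_t // mulrC subrr.
Qed.

Lemma rint_integral a : \sum_(p <- D a) rint p.1 *: p.2 = rint a *: 1.
Proof.
apply: dual_basis_inj => j; rewrite klinear_sum // klinearZ // -tev_rint //.
by apply: eq_bigr => p _; rewrite klinearZ.
Qed.

Lemma lint_integral a : \sum_(p <- D a) lint p.2 *: p.1 = lint a *: 1.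
Proof.
apply: dual_basis_inj => j; rewrite klinear_sum // klinearZ // mulrC -tev_lint //.
by apply: eq_bigr => p _; rewrite klinearZ // mulrC.
Qed.

Definition rint_frobx j := antipode_inv_fun t lint (e j).
Definition rint_froby j := \sum_(p <- D t) g j p.2 *: p.1.

Lemma rint_frobeniusl a : \sum_(j < n) rint (rint_froby j * a) *: rint_frobx j = a.
Proof.
have Sinv_linear := antipode_inv_fun_linear t lint_linear.
rewrite -{2}[a](antipodeK_fun rint_linear rint_integral rint_t lint_linear lint_integral lint_t).
rewrite (dual_basisE (antipode _ _ a)) (hlinear_sum Sinv_linear).
apply: eq_bigr => j _; rewrite (hlinearZ Sinv_linear); congr (_ *: _).
rewrite /rint_froby mulr_suml /antipode (klinear_sum rint_linear) klinear_sum //.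
by apply: eq_bigr => p _; rewrite -scalerAl (klinearZ rint_linear) klinearZ // mulrC.
Qed.

Lemma rint_frobeniusr a : \sum_(j < n) rint (a * rint_frobx j) *: rint_froby j = a.
Proof.
pose chi b := \sum_(i < N) psi i a * phi i b.
have chiL : klinear chi by apply: klinear_big => i; apply: klinear_mull.
have chi_t : \sum_(p <- D t) chi p.2 *: p.1 = a.
  apply: dual_basis_inj => l; rewrite klinear_sum // -(frob_dualr (g_linear l)) /conv /tev.
  under eq_bigr do rewrite klinearZ // mulr_suml.
  rewrite exchange_big; apply: eq_bigr => i _.
  by rewrite mulr_suml; apply: eq_bigr => p _; ring.
have rint_frobx_chi j : rint (a * rint_frobx j) = chi (e j).
  rewrite -{1}chi_t mulr_suml (klinear_sum rint_linear).
  rewrite -[e j](antipode_inv_funK rint_linear rint_integral rint_t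
                                    lint_linear lint_integral lint_t).
  rewrite /rint_frobx /antipode klinear_sum //; apply: eq_bigr => p _.
  by rewrite -scalerAl (klinearZ rint_linear) klinearZ // mulrC.
rewrite -[RHS]chi_t; under eq_bigr do rewrite rint_frobx_chi /rint_froby scaler_sumr.
rewrite exchange_big; apply: eq_bigr => p _.
rewrite (klinear_expand p.2 chiL) scaler_suml; apply: eq_bigr => j _.
by rewrite scalerA mulrC.
Qed.

End DualFrobenius.

Lemma FH_dual_FH_algebra : FH_dual D eps -> FH_algebra D eps.
Proof.
case=> t [[N [phi [psi [phipsi_linear frob_dual]]]] t_eval_integral].
have phi_linear i := (phipsi_linear i).1; have psi_linear i := (phipsi_linear i).2.
have frob_duall chi chiL a := (frob_dual chi chiL a).1.
have frob_dualr chi chiL a := (frob_dual chi chiL a).2.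
have t_integral c : t * c = eps c *: t.
  by apply: dual_basis_inj => j; rewrite t_eval_integral // klinearZ // mulrC.
exists (rint phi psi); split; first exact: rint_linear.
split; last exact: (rint_integral phi_linear psi_linear frob_duall frob_dualr).
exists n, (rint_frobx t phi psi), (rint_froby t) => a; split.
  exact: (rint_frobeniusl phi_linear psi_linear frob_duall frob_dualr t_integral).
exact: (rint_frobeniusr phi_linear psi_linear frob_duall frob_dualr t_integral).
Qed.

End Bialgebra.

Theorem mainTheorem17 (k : comNzRingType) (H : algType k)
  (D : H -> seq (H * H)) (eps : H -> k) :
  fgp H -> is_bialgebra D eps ->
  (FH_algebra D eps <-> FH_dual D eps).
Proof.
case=> n [e [g [g_linear dual_basisE]]].
case=> -[eps_linear eps1 epsM] [coprod [coassoc counit]].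
have coprodZD phi psi phiL psiL := (coprod phi psi phiL psiL).1.
have coprodM phi psi phiL psiL := (coprod phi psi phiL psiL).2.1.
have coprod1 phi psi phiL psiL := (coprod phi psi phiL psiL).2.2.
have counitl a := (counit a).1; have counitr a := (counit a).2.
by split; [apply: FH_algebra_FH_dual | apply: FH_dual_FH_algebra].
Qed.
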